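(* Under the three-receiver coding module below, in every slot the transmitted linear combination is innovative (i.e., not already known, so it increases the receiver's rank if received) to every receiver that has not decoded everything that the sender knows.
   Context: A sender broadcasts packets $\mathbf{p}_1,\mathbf{p}_2,\dots$ (indexed by arrival order, vectors over $\mathbb{F}_3$) to three receivers $1,2,3$ over a slotted erasure broadcast channel; each slot it transmits at most one linear combination of arrived packets, each receiver either receives it or suffers an erasure, and perfect feedback gives the sender every receiver's knowledge. The rank of a receiver is the dimension of the space of linear combinations it knows. Receiver $i$ has heard of a packet if it knows some linear combination involving that packet (with nonzero coefficient); $H_i$ is the set of packets it has heard of and $D_i$ the set it has decoded. ''Oldest'' means smallest index. Coding module: labels $L,N,D$ form a permutation of $\{1,2,3\}$; initially $L=1,N=2,D=3,m=0$. Each slot: let $U=\{\mathbf{p}_1,\dots,\mathbf{p}_m\}$ together with $\mathbf{p}_{m+1}$ if it has arrived, and set $S_1=D_N\cap D_D$, $S_2=D_N\cap(H_D\setminus D_D)$, $S_3=D_N\setminus H_D$, $S_4=D_D\setminus D_N$, $S_5=(H_D\setminus D_D)\setminus D_N$, $S_6=U\setminus(H_D\cup D_N)$. Transmit: Case 1 ($\mathbf{p}_{m+1}$ not arrived): if $S_2,S_4$ both nonempty send the sum of their oldest packets; else if $S_3,S_4$ both nonempty send the sum of their oldest packets; else send the oldest packet of the first nonempty set among $S_5,S_6,S_2,S_3,S_4$; if all are empty send nothing. Case 2 ($\mathbf{p}_{m+1}\in S_1$): send $\mathbf{p}_{m+1}$ plus whatever Case 1 would send. Case 3 ($\mathbf{p}_{m+1}\in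 S_2$): send $\mathbf{p}_{m+1}+c\mathbf{p}$ with $\mathbf{p}$ the oldest packet of the first nonempty set among $S_4,S_5,S_6$, where $c=1$ unless $\mathbf{p}\in S_5$, in which case $c\in\{1,2\}$ is chosen so that the combination is innovative to receiver $D$. Case 4 ($\mathbf{p}_{m+1}\in S_3$): send $\mathbf{p}_{m+1}+\mathbf{p}$, $\mathbf{p}$ the oldest packet of the first nonempty set among $S_4,S_5,S_6$. Case 5 ($\mathbf{p}_{m+1}\in S_4$): send $\mathbf{p}_{m+1}+\mathbf{p}$, $\mathbf{p}$ the oldest packet of the first nonempty set among $S_2,S_3,S_6$. (In Cases 3–5, if all listed sets are empty, $\mathbf{p}_{m+1}$ is sent alone.) Case 6 (otherwise): send $\mathbf{p}_{m+1}$. After feedback, update $H_i,D_i$, set $m$ to the maximum rank of the three receivers; among receivers that have decoded all of $\mathbf{p}_1,\dots,\mathbf{p}_m$, label the one with lowest index $L$ (if there is none, assign labels arbitrarily); of the other two receivers, if exactly one has nonempty unsolved set $H_i\setminus D_i$, label it $D$ and the other $N$; otherwise assign $D,N$ arbitrarily. *)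

From HB Require Import structures.
From mathcomp Require Import all_boot all_order all_algebra.
Set Implicit Arguments. Unset Strict Implicit. Unset Printing Implicit Defensive.
Import GRing.Theory.
Local Open Scope ring_scope.

Notation F3 := 'F_3.

(** A linear combination of packets is represented by its coefficient
    function: [w k] is the coefficient of packet p_k (packets are indexed
    from 1 in arrival order; index 0 is never used). *)
Definition vec := nat -> F3.
Definition vzero : vec := fun _ => 0.
Definition vadd (u v : vec) : vec := fun j => u j + v j.
Definition vscale (c : F3) (v : vec) : vec := fun j => c * v j.
Definition unit_vec (k : nat) : vec := fun j => (j == k)%:R.

Definition knows (L : seq vec) (w : vec) : Prop :=
  exists cs : seq F3, size cs = size L /\
    forall j, w j = \sum_(i < size L) cs`_i * (nth vzero L i) j.

Definition lin_indep (L : seq vec) : Prop :=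
  forall cs : seq F3, size cs = size L ->
    (forall j, \sum_(i < size L) cs`_i * (nth vzero L i) j = 0) ->
    forall i, (i < size L)%N -> cs`_i = 0.

Definition is_rank (L : seq vec) (r : nat) : Prop :=
  (exists B : seq vec, size B = r /\ lin_indep B /\ forall i, (i < size B)%N -> knows L (nth vzero B i))
  /\ (forall B : seq vec, lin_indep B -> (forall i, (i < size B)%N -> knows L (nth vzero B i)) ->
        (size B <= r)%N).

Definition heard (L : seq vec) (k : nat) : Prop :=
  (1 <= k)%N /\ exists w, knows L w /\ w k != 0.
Definition decoded (L : seq vec) (k : nat) : Prop :=
  (1 <= k)%N /\ knows L (unit_vec k).

Definition decoded_upto (L : seq vec) (m : nat) : Prop :=
  forall k, (1 <= k <= m)%N -> decoded L k.
Definition unsolved_nonempty (L : seq vec) : Prop :=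
  exists k, heard L k /\ ~ decoded L k.

Definition nonempty (P : nat -> Prop) : Prop := exists k, P k.
Definition oldest (P : nat -> Prop) (k : nat) : Prop :=
  P k /\ forall j, P j -> (k <= j)%N.
Fixpoint first_oldest (l : seq (nat -> Prop)) (k : nat) : Prop :=
  match l with
  | [::] => False
  | P :: l' => (nonempty P /\ oldest P k) \/ (~ nonempty P /\ first_oldest l' k)
  end.
Fixpoint all_empty (l : seq (nat -> Prop)) : Prop :=
  match l with
  | [::] => True
  | P :: l' => ~ nonempty P /\ all_empty l'
  end.

Section Sets.
(* K : knowledge of the three receivers, a : number of arrived packets,
   m : the counter m, n d : receivers labelled N and D. *)
Variables (K : 'I_3 -> seq vec) (a m : nat) (n d : 'I_3).

Definition setU (k : nat) : Prop := (1 <= k <= m)%N \/ (k = m.+1 /\ (m.+1 <= a)%N).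
Definition S1 k := decoded (K n) k /\ decoded (K d) k.
Definition S2 k := decoded (K n) k /\ heard (K d) k /\ ~ decoded (K d) k.
Definition S3 k := decoded (K n) k /\ ~ heard (K d) k.
Definition S4 k := decoded (K d) k /\ ~ decoded (K n) k.
Definition S5 k := (heard (K d) k /\ ~ decoded (K d) k) /\ ~ decoded (K n) k.
Definition S6 k := setU k /\ ~ (heard (K d) k \/ decoded (K n) k).

Definition case1 (x : option vec) : Prop :=
  (nonempty S2 /\ nonempty S4 /\
     exists j k, oldest S2 j /\ oldest S4 k /\ x = Some (vadd (unit_vec j) (unit_vec k)))
  \/ (~ (nonempty S2 /\ nonempty S4) /\ nonempty S3 /\ nonempty S4 /\
     exists j k, oldest S3 j /\ oldest S4 k /\ x = Some (vadd (unit_vec j) (unit_vec k)))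
  \/ (~ (nonempty S2 /\ nonempty S4) /\ ~ (nonempty S3 /\ nonempty S4) /\
      ((exists k, first_oldest [:: S5; S6; S2; S3; S4] k /\ x = Some (unit_vec k))
       \/ (all_empty [:: S5; S6; S2; S3; S4] /\ x = None))).

Definition new_pkt : vec := unit_vec m.+1.

Definition send_with (l : seq (nat -> Prop)) (x : option vec) : Prop :=
  (exists p, first_oldest l p /\ x = Some (vadd new_pkt (unit_vec p)))
  \/ (all_empty l /\ x = Some new_pkt).

Definition coef_ok (p : nat) (c : F3) : Prop :=
  (~ S5 p -> c = 1) /\
  (S5 p -> (c = 1 \/ c = 2%:R) /\
     ((exists c', (c' = 1 \/ c' = 2%:R) /\
                  ~ knows (K d) (vadd new_pkt (vscale c' (unit_vec p)))) ->
      ~ knows (K d) (vadd new_pkt (vscale c (unit_vec p))))).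

Definition tx_rule (x : option vec) : Prop :=
  (~ (m.+1 <= a)%N /\ case1 x)
  \/ ((m.+1 <= a)%N /\ S1 m.+1 /\
      exists y, case1 y /\
        x = Some (match y with Some v => vadd new_pkt v | None => new_pkt end))
  \/ ((m.+1 <= a)%N /\ S2 m.+1 /\
      ((exists p c, first_oldest [:: S4; S5; S6] p /\ coef_ok p c /\
          x = Some (vadd new_pkt (vscale c (unit_vec p))))
       \/ (all_empty [:: S4; S5; S6] /\ x = Some new_pkt)))
  \/ ((m.+1 <= a)%N /\ S3 m.+1 /\ send_with [:: S4; S5; S6] x)
  \/ ((m.+1 <= a)%N /\ S4 m.+1 /\ send_with [:: S2; S3; S6] x)
  \/ ((m.+1 <= a)%N /\ ~ S1 m.+1 /\ ~ S2 m.+1 /\ ~ S3 m.+1 /\ ~ S4 m.+1 /\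
      x = Some new_pkt).
End Sets.

Definition max_rank (K : 'I_3 -> seq vec) (m : nat) : Prop :=
  exists r : 'I_3 -> nat, (forall i, is_rank (K i) (r i)) /\ m = (\max_i r i)%N.

Definition valid_labels (K : 'I_3 -> seq vec) (m : nat) (l n d : 'I_3) : Prop :=
  l != n /\ l != d /\ n != d /\
  ((exists i, decoded_upto (K i) m) ->
     (decoded_upto (K l) m /\ forall i, decoded_upto (K i) m -> (l <= i)%N) /\
     (~ (unsolved_nonempty (K n) <-> unsolved_nonempty (K d)) ->
        unsolved_nonempty (K d))).

Definition r1 : 'I_3 := @Ordinal 3 0 isT.
Definition r2 : 'I_3 := @Ordinal 3 1 isT.
Definition r3 : 'I_3 := @Ordinal 3 2 isT.

(** Slot t: [arr t] packets have arrived, [K t i] is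
    what receiver i has received before slot t, [m t], [lL t], [lN t], [lD t]
    the counter and labels in force at slot t, [tx t] the transmission
    ([None] = nothing sent) and [rcv t i] whether receiver i received it. *)
Definition valid_run (arr : nat -> nat) (rcv : nat -> 'I_3 -> bool)
    (K : nat -> 'I_3 -> seq vec) (m : nat -> nat) (lL lN lD : nat -> 'I_3)
    (tx : nat -> option vec) : Prop :=
  (forall t, (arr t <= arr t.+1)%N) /\
  (forall i, K 0%N i = [::]) /\ m 0%N = 0%N /\
  lL 0%N = r1 /\ lN 0%N = r2 /\ lD 0%N = r3 /\
  (forall t, tx_rule (K t) (arr t) (m t) (lN t) (lD t) (tx t)) /\
  (forall t i, K t.+1 i =
     match tx t with
     | Some v => if rcv t i then rcons (K t i) v else K t i
     | None => K t i
     end) /\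
  (forall t, max_rank (K t.+1) (m t.+1)) /\
  (forall t, valid_labels (K t.+1) (m t.+1) (lL t.+1) (lN t.+1) (lD t.+1)).

(* Induction over the slots on an invariant of the receivers' knowledge: every
   received combination involves only p_1, ..., p_{m+1}; some receiver has decoded
   p_1, ..., p_m; m is the maximum rank; at most one receiver has a nonempty unsolved
   set; and for any two receivers i, j at most one packet is unsolved at i and
   undecoded at j.  Under the invariant L and N are solved, S5 has at most one packet,
   and no receiver has decoded p_1, ..., p_{m+1} (its rank would exceed m).  Hence in
   each case of the coding module the combination sent involves, for every pending
   receiver, a packet it has not heard of, or an undecoded packet whose companions it
   has decoded, or (for a solved receiver) any undecoded packet; such a combination is
   not known.  The same case analysis shows that the combination is "safe", which is
   what the invariant needs to survive any pattern of erasures; the rank bound shows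
   that m grows by at most one and that the new maximum-rank receiver has decoded the
   new window. *)

From Pilot Require Import Defs.
From mathcomp Require Import all_boot all_order all_algebra.
From mathcomp Require Import ring.
From Stdlib Require Import Classical.
Set Implicit Arguments. Unset Strict Implicit. Unset Printing Implicit Defensive.
Import GRing.Theory.
Local Open Scope ring_scope.

Lemma knows_ext L u v : knows L u -> u =1 v -> knows L v.
Proof. by move=> [cs [Hs Hu]] E; exists cs; split=> // j; rewrite -E. Qed.

Lemma knows0 L : knows L vzero.
Proof.
exists (nseq (size L) 0); split; first by rewrite size_nseq.
by move=> j; rewrite big1 // => i _; rewrite nth_nseq if_same mul0r.
Qed.

Lemma knows_lin L c u v : knows L u -> knows L v -> knows L (fun j => u j + c * v j).
Proof.
move=> [cs1 [Hs1 Hu]] [cs2 [Hs2 Hv]].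
exists (mkseq (fun i => cs1`_i + c * cs2`_i) (size L)); split; first by rewrite size_mkseq.
move=> j; rewrite Hu Hv mulr_sumr -big_split /=; apply: eq_bigr => i _.
by rewrite nth_mkseq // mulrDl mulrA.
Qed.

Lemma knows_scale L c u : knows L u -> knows L (fun j => c * u j).
Proof. by move=> Hu; apply: knows_ext (knows_lin c (knows0 L) Hu) _ => j; rewrite add0r. Qed.

Lemma knows_sum L (s : seq nat) (P : pred nat) (f : nat -> vec) :
  (forall k, k \in s -> P k -> knows L (f k)) ->
  knows L (fun j => \sum_(k <- s | P k) f k j).
Proof.
elim: s => [|x s IH] Hf.
  by apply: knows_ext (knows0 L) _ => j; rewrite big_nil.
have Hs : knows L (fun j => \sum_(k <- s | P k) f k j).
  by apply: IH => k Hk; apply: Hf; rewrite inE Hk orbT.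
case Px: (P x).
  apply: knows_ext (knows_lin 1 Hs (Hf x (mem_head x s) Px)) _ => j.
  by rewrite big_cons Px mul1r addrC.
by apply: knows_ext Hs _ => j; rewrite big_cons Px.
Qed.

Lemma knows_rcons L v w : knows L w -> knows (rcons L v) w.
Proof.
move=> [cs [Hs Hw]]; exists (rcons cs 0); split; first by rewrite !size_rcons Hs.
move=> j; rewrite size_rcons big_ord_recr /= !nth_rcons Hs ltnn eqxx mul0r addr0 Hw.
by apply: eq_bigr => i _; rewrite !nth_rcons Hs ltn_ord.
Qed.

Lemma knows_rcons_last L v : knows (rcons L v) v.
Proof.
exists (rcons (nseq (size L) 0) 1); split; first by rewrite !size_rcons size_nseq.
move=> j; rewrite size_rcons big_ord_recr /= !nth_rcons size_nseq !ltnn !eqxx mul1r.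
by rewrite big1 ?add0r // => i _; rewrite nth_rcons size_nseq ltn_ord nth_nseq ltn_ord mul0r.
Qed.

Lemma knows_rconsP L v w : knows (rcons L v) w -> exists c, knows L (fun j => w j - c * v j).
Proof.
move=> [cs [Hs Hw]]; rewrite size_rcons in Hs.
exists cs`_(size L), (take (size L) cs); split; first by rewrite size_take Hs ltnSn.
move=> j; rewrite Hw size_rcons big_ord_recr /= nth_rcons ltnn eqxx addrK.
by apply: eq_bigr => i _; rewrite nth_rcons ltn_ord nth_take.
Qed.

Lemma knows_nil w j : knows [::] w -> w j = 0.
Proof. by move=> [cs [_ ->]]; rewrite big_ord0. Qed.

Definition supported_in (v : vec) (N : nat) := forall k, v k != 0 -> (1 <= k <= N)%N.
Definition knowledge_in (L : seq vec) (N : nat) := forall w, knows L w -> supported_in w N.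

Lemma unit_vec_neq0 p k : (unit_vec p k != 0) = (k == p).
Proof. by rewrite /unit_vec; case: (k == p); rewrite ?oner_neq0 ?eqxx. Qed.

Lemma supported_unit p N : (1 <= p <= N)%N -> supported_in (unit_vec p) N.
Proof. by move=> Hp k; rewrite unit_vec_neq0 => /eqP ->. Qed.

Lemma supported_in_widen v N N' : (N <= N')%N -> supported_in v N -> supported_in v N'.
Proof. by move=> HN Hv k /Hv /andP [-> /leq_trans]; apply. Qed.

Lemma knowledge_nil N : knowledge_in [::] N.
Proof. by move=> w Hw k; rewrite (knows_nil k Hw) eqxx. Qed.

Lemma knowledge_rcons L v N :
  knowledge_in L N -> supported_in v N -> knowledge_in (rcons L v) N.
Proof.
move=> HL Hv w /knows_rconsP [c /HL Hw] k Hk.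
case: (eqVneq (v k) 0) => [Hv0|]; last exact: Hv.
by apply: Hw; rewrite Hv0 mulr0 subr0.
Qed.

Lemma knowledge_in_widen L N N' : (N <= N')%N -> knowledge_in L N -> knowledge_in L N'.
Proof. by move=> HN HL w /HL; apply: supported_in_widen. Qed.

Lemma vec_expand w N j : supported_in w N ->
  w j = \sum_(1 <= k < N.+1) w k * unit_vec k j.
Proof.
move=> Hw; rewrite (eq_bigr (fun k => if k == j then w k else 0)); last first.
  by move=> k _; rewrite /unit_vec eq_sym mulr_natr mulrb.
rewrite -big_mkcond big_nat1_eq ltnS; case: ifP => // Hj.
by apply/eqP; apply: contraFT Hj => /Hw.
Qed.

Lemma knows_unit_isolate L N w q : knowledge_in L N -> knows L w -> w q != 0 ->
  (forall k, k != q -> w k != 0 -> knows L (unit_vec k)) -> knows L (unit_vec q).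
Proof.
move=> HL Hw Hq Hk; have Hsupp := HL w Hw.
have Hrest : knows L (fun j => \sum_(1 <= k < N.+1 | k != q) w k * unit_vec k j).
  apply: knows_sum => k _ Hkq; case: (eqVneq (w k) 0) => [Hk0|Hk0].
    by apply: knows_ext (knows0 L) _ => j; rewrite Hk0 mul0r.
  exact: knows_scale (Hk k Hkq Hk0).
apply: knows_ext (knows_scale (w q)^-1 (knows_lin (-1) Hw Hrest)) _ => j.
have Hqin : q \in index_iota 1 N.+1 by rewrite mem_index_iota ltnS; exact: Hsupp.
rewrite (vec_expand j Hsupp) (bigD1_seq q) ?iota_uniq //= mulN1r addrK mulrA.
by rewrite mulVf ?mul1r.
Qed.

Definition solved (L : seq vec) := forall k, heard L k -> decoded L k.

Lemma solvedP L : solved L <-> ~ unsolved_nonempty L.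
Proof.
split; first by move=> HL [k [Hh Hd]]; apply/Hd/HL.
by move=> HL k Hh; apply: NNPP => Hd; apply: HL; exists k.
Qed.

Lemma decoded_heard L k : decoded L k -> heard L k.
Proof. by move=> [Hk Hu]; split=> //; exists (unit_vec k); rewrite unit_vec_neq0. Qed.

Lemma decoded_rcons L v k : decoded L k -> decoded (rcons L v) k.
Proof. by move=> [Hk Hu]; split=> //; exact: knows_rcons. Qed.

Lemma heard_rconsP L v k : heard (rcons L v) k -> heard L k \/ v k != 0.
Proof.
move=> [Hk [w [/knows_rconsP [c Hw] Hwk]]].
case: (eqVneq (v k) 0) => [Hv0|]; last by right.
by left; split=> //; exists (fun j => w j - c * v j); rewrite Hv0 mulr0 subr0.
Qed.

Lemma knowledge_heard L N k : knowledge_in L N -> heard L k -> (1 <= k <= N)%N.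
Proof. by move=> HL [_ [w [/HL Hw /Hw]]]. Qed.

Lemma decoded_isolate L N w q : knowledge_in L N -> knows L w -> w q != 0 ->
  (forall k, k != q -> w k != 0 -> decoded L k) -> decoded L q.
Proof.
move=> HL Hw Hq Hk; split; first by case/andP: (HL w Hw q Hq).
by apply: knows_unit_isolate HL Hw Hq _ => k Hkq /(Hk k Hkq) [].
Qed.

Lemma not_knows_unheard L v q : v q != 0 -> (1 <= q)%N -> ~ heard L q -> ~ knows L v.
Proof. by move=> Hq H1 Hh Hv; apply: Hh; split=> //; exists v. Qed.

Lemma not_knows_solved L v q : solved L -> v q != 0 -> (1 <= q)%N -> ~ decoded L q ->
  ~ knows L v.
Proof. by move=> HL Hq H1 Hd Hv; apply/Hd/HL; split=> //; exists v. Qed.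

Lemma not_knows_isolated L N v q : knowledge_in L N -> v q != 0 -> ~ decoded L q ->
  (forall k, k != q -> v k != 0 -> decoded L k) -> ~ knows L v.
Proof. by move=> HL Hq Hd Hk Hv; apply/Hd/(decoded_isolate HL Hv Hq). Qed.

Lemma solved_of_unsolved_le1 L N q : knowledge_in L N ->
  (forall k, heard L k -> ~ decoded L k -> k = q) -> solved L.
Proof.
move=> HL Hu k Hk; apply: NNPP => Hnd; have Ek := Hu k Hk Hnd; subst k.
case: (Hk) => H1 [w [Hw Hwq]]; apply: Hnd.
apply: (decoded_isolate HL Hw Hwq) => j Hjq Hwj; apply: NNPP => Hjd.
have Hj : heard L j by split; [case/andP: (HL w Hw j Hwj)|exists w].
by move/eqP: Hjq; apply; apply: Hu.
Qed.

Lemma lin_indep_units n : lin_indep (mkseq (fun i => unit_vec i.+1) n).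
Proof.
move=> cs; rewrite size_mkseq => _ Hcs i Hi.
move: (Hcs i.+1); rewrite (bigD1 (Ordinal Hi)) //= nth_mkseq //.
rewrite /unit_vec eqxx mulr1 big1 ?addr0 // => k Hk.
rewrite nth_mkseq // eqSS; case: eqP => [Eik|]; last by rewrite mulr0.
by move: Hk; rewrite -(inj_eq val_inj) /= Eik eqxx.
Qed.

Lemma rank_ge_decoded L r n : is_rank L r ->
  (forall k, (1 <= k <= n)%N -> decoded L k) -> (n <= r)%N.
Proof.
move=> [_ Hmax] Hd; rewrite -(size_mkseq (fun i => unit_vec i.+1) n).
apply: Hmax; first exact: lin_indep_units.
by move=> i; rewrite size_mkseq => Hi; rewrite nth_mkseq //; case: (Hd i.+1).
Qed.

Lemma is_rank_nil : is_rank [::] 0.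
Proof.
split; first by exists [::]; split=> //; split=> // cs _ _ i.
move=> B HB Hk; case: (posnP (size B)) => [->//|Hpos]; exfalso.
have := HB (1 :: nseq (size B).-1 0); rewrite /= size_nseq prednK // => H.
have /eqP : (1 : F3) = 0.
  apply: (H erefl _ 0 Hpos) => j; rewrite big1 // => i _.
  by rewrite (knows_nil _ (Hk i (ltn_ord i))) mulr0.
by rewrite oner_eq0.
Qed.

Lemma is_rank_unique L r r' : is_rank L r -> is_rank L r' -> r = r'.
Proof.
move=> [[B [<- [HB HBL]]] Hmax] [[B' [<- [HB' HBL']]] Hmax'].
by apply/eqP; rewrite eqn_leq Hmax' // Hmax.
Qed.

Lemma max_rank_ge K m i r : max_rank K m -> is_rank (K i) r -> (r <= m)%N.
Proof.
move=> [rr [Hr ->]] Hi; rewrite (is_rank_unique Hi (Hr i)); exact: leq_bigmax.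
Qed.

Section Coordinates.

Variables (B : seq vec) (n : nat).
Hypothesis HBn : forall i, (i < size B)%N -> supported_in (nth vzero B i) n.

(* Column j holds the coefficients of packet j.+1: packets are numbered from 1. *)
Definition coord_mx : 'M[F3]_(size B, n) := \matrix_(i, j) (nth vzero B i) j.+1.

Lemma coord_mx_mul (x : 'rV[F3]_(size B)) (j : 'I_n) :
  (x *m coord_mx) 0 j = \sum_(i < size B) x 0 i * nth vzero B i j.+1.
Proof. by rewrite mxE; apply: eq_bigr => i _; rewrite mxE. Qed.

Lemma coord_out i j : (i < size B)%N -> (j == 0%N) || (n < j)%N -> nth vzero B i j = 0.
Proof.
move=> Hi Hj; apply/eqP; apply: contraTT Hj => /(HBn Hi) /andP [H1 H2].
by rewrite negb_or -lt0n H1 -leqNgt H2.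
Qed.

Hypothesis HBindep : lin_indep B.

Lemma coord_mx_free : row_free coord_mx.
Proof.
rewrite -kermx_eq0; apply/eqP/row_matrixP => i; rewrite row0.
set x := row i (kermx coord_mx).
have Hx : x *m coord_mx = 0 by rewrite /x -row_mul mulmx_ker row0.
apply/rowP => k; rewrite [RHS]mxE.
pose cs := mkseq (fun i => x 0 (insubd k i)) (size B).
have Hcs (i' : 'I_(size B)) : cs`_i' = x 0 i'.
  by rewrite nth_mkseq //; congr (x 0 _); apply: val_inj; rewrite val_insubd ltn_ord.
have Hcomb j : \sum_(i' < size B) cs`_i' * nth vzero B i' j = 0.
  under eq_bigr => i' _ do rewrite Hcs.
  case: j => [|j]; first by rewrite big1 // => i' _; rewrite coord_out ?mulr0.
  case: (ltnP j n) => Hjn; first by rewrite -(coord_mx_mul x (Ordinal Hjn)) Hx mxE.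
  by rewrite big1 // => i' _; rewrite coord_out ?mulr0 // ltnS Hjn orbT.
by rewrite -Hcs (HBindep (size_mkseq _ _) Hcomb (ltn_ord k)).
Qed.

Lemma lin_indep_size : (size B <= n)%N.
Proof. by have /eqP <- := coord_mx_free; exact: rank_leq_col. Qed.

Lemma lin_indep_span L : size B = n ->
  (forall i, (i < size B)%N -> knows L (nth vzero B i)) ->
  forall k, (1 <= k <= n)%N -> knows L (unit_vec k).
Proof.
move=> Hsz HL [//|k] /andP [_ Hk].
have Hfull : row_full coord_mx by rewrite /row_full -{2}Hsz; have /eqP -> := coord_mx_free.
have /submxP [D HD] := submx_full (delta_mx (0 : 'I_1) (Ordinal Hk)) Hfull.
have Hpos : (0 < size B)%N by rewrite Hsz (leq_ltn_trans _ Hk).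
pose o := Ordinal Hpos.
have Hsum : knows L (fun j => \sum_(0 <= i < size B) D 0 (insubd o i) * nth vzero B i j).
  by apply: knows_sum => i; rewrite mem_index_iota => Hi _; apply/knows_scale/HL.
apply: knows_ext Hsum _ => j; rewrite big_mkord.
have Hins (i : 'I_(size B)) : insubd o i = i by apply: val_inj; rewrite val_insubd ltn_ord.
under eq_bigr => i _ do rewrite Hins.
case: j => [|j]; first by rewrite big1 // => i _; rewrite coord_out ?mulr0.
case: (ltnP j n) => Hjn.
  by rewrite -(coord_mx_mul D (Ordinal Hjn)) -HD mxE /unit_vec eqSS.
rewrite big1; last by move=> i _; rewrite coord_out ?mulr0 // ltnS Hjn orbT.
by rewrite /unit_vec eqSS; case: eqP => // Ejk; move: (Hk); rewrite -Ejk ltnNge Hjn.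
Qed.

End Coordinates.

Lemma not_knows_unit L p : (1 <= p)%N -> ~ decoded L p -> ~ knows L (unit_vec p).
Proof. by move=> Hp Hd Hu; apply: Hd. Qed.

Lemma knows_drop_decoded L q v : decoded L q -> knows L (vadd (unit_vec q) v) -> knows L v.
Proof.
move=> [_ Hq] Hv; apply: knows_ext (knows_lin (-1) Hv Hq) _ => j.
by rewrite /vadd; ring.
Qed.

(* 2 (p_q + p_p) - (p_q + 2 p_p) = p_q. *)
Lemma knows_of_two_coefs L q p :
  knows L (vadd (unit_vec q) (vscale 1 (unit_vec p))) ->
  knows L (vadd (unit_vec q) (vscale 2%:R (unit_vec p))) -> knows L (unit_vec q).
Proof.
move=> H1 H2; apply: knows_ext (knows_lin (-1) (knows_scale 2%:R H1) H2) _ => j.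
rewrite /vadd /vscale; ring.
Qed.

Lemma vadd_neq0 u w k : vadd u w k != 0 -> u k != 0 \/ w k != 0.
Proof. by rewrite /vadd; case: (eqVneq (u k) 0) => [->|]; [rewrite add0r; right|left]. Qed.

Definition single_at (w : vec) (p : nat) := w p != 0 /\ forall k, w k != 0 -> k = p.

Lemma single_at_unit p : single_at (unit_vec p) p.
Proof. by split=> [|k]; rewrite unit_vec_neq0 ?eqxx // => /eqP. Qed.

Lemma single_at_scale c p : c != 0 -> single_at (vscale c (unit_vec p)) p.
Proof.
move=> Hc; split=> [|k]; first by rewrite /vscale mulf_neq0 ?unit_vec_neq0.
by rewrite /vscale mulf_eq0 negb_or unit_vec_neq0 => /andP [_ /eqP].
Qed.

Section UnitPlusSingle.

Variables (q p : nat) (w : vec).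
Hypotheses (Hw : single_at w p) (Hqp : q != p).
Let v := vadd (unit_vec q) w.

Lemma unit_plus_single_supp k : v k != 0 -> k = q \/ k = p.
Proof. by case/vadd_neq0 => [|/Hw.2]; [rewrite unit_vec_neq0 => /eqP|]; auto. Qed.

Lemma unit_plus_single_at_unit : v q != 0.
Proof.
have Hwq : w q = 0 by apply/eqP; apply: contraNT Hqp => /Hw.2 /eqP.
by rewrite /v /vadd Hwq /unit_vec eqxx addr0 oner_neq0.
Qed.

Lemma unit_plus_single_at_single : v p != 0.
Proof. by rewrite /v /vadd /unit_vec [p == q]eq_sym (negbTE Hqp) add0r; case: Hw. Qed.

Lemma unit_plus_single_supported N : (1 <= q <= N)%N -> (1 <= p <= N)%N -> supported_in v N.
Proof. by move=> Hq Hp k /unit_plus_single_supp [->|->]. Qed.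

End UnitPlusSingle.

Lemma ord3_cover (l n d i : 'I_3) : l != n -> l != d -> n != d -> [\/ i = l, i = n | i = d].
Proof.
move=> Hln Hld Hnd; suff: [|| i == l, i == n | i == d].
  by case/or3P=> /eqP; [apply: Or31|apply: Or32|apply: Or33].
by move: l n d i Hln Hld Hnd; do 4 case=> [[|[|[|//]]] ?].
Qed.

Lemma first_oldest3P (A B C : nat -> Prop) p : first_oldest [:: A; B; C] p ->
  [\/ A p, ~ nonempty A /\ B p | [/\ ~ nonempty A, ~ nonempty B & C p]].
Proof.
by case=> [[_ [? _]]|[? [[_ [? _]]|[? [[_ [? _]]|[_ []]]]]]];
  [constructor 1|constructor 2|constructor 3].
Qed.

Definition unsolved_outside (Li Lj : seq vec) (k : nat) :=
  heard Li k /\ ~ decoded Li k /\ ~ decoded Lj k.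

Record slot_invariant (K : 'I_3 -> seq vec) (m : nat) : Prop := SlotInvariant {
  inv_support : forall i, knowledge_in (K i) m.+1;
  inv_leader : exists i, decoded_upto (K i) m;
  inv_rank : max_rank K m;
  inv_unsolved : forall i j, i != j ->
    unsolved_nonempty (K i) -> unsolved_nonempty (K j) -> False;
  inv_outside : forall i j, i != j -> forall k1 k2,
    unsolved_outside (K i) (K j) k1 -> unsolved_outside (K i) (K j) k2 -> k1 = k2 }.

Section Slot.

Variables (K : 'I_3 -> seq vec) (a m : nat) (l n d : 'I_3).
Hypotheses (Hinv : slot_invariant K m) (Hlab : valid_labels K m l n d).

Local Notation S1 := (S1 K n d).
Local Notation S2 := (S2 K n d).
Local Notation S3 := (S3 K n d).
Local Notation S4 := (S4 K n d).
Local Notation S5 := (S5 K n d).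
Local Notation S6 := (S6 K a m n d).
Local Notation new := (new_pkt m).

Lemma label_ln : l != n. Proof. by case: Hlab. Qed.
Lemma label_ld : l != d. Proof. by case: Hlab => _ []. Qed.
Lemma label_nd : n != d. Proof. by case: Hlab => _ [_ []]. Qed.

Lemma receiver_cases i : [\/ i = l, i = n | i = d].
Proof. exact: ord3_cover label_ln label_ld label_nd. Qed.

Lemma support_window i : knowledge_in (K i) m.+1.
Proof. by case: Hinv. Qed.

Lemma leader_decoded : decoded_upto (K l) m.
Proof. by case: Hlab => _ [_ [_ /(_ (inv_leader Hinv)) [[]]]]. Qed.

Lemma no_full_decoder i : ~ (forall k, (1 <= k <= m.+1)%N -> decoded (K i) k).
Proof.
have [r [Hr Hm]] := inv_rank Hinv; move=> /(rank_ge_decoded (Hr i)).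
by rewrite leqNgt ltnS (max_rank_ge (inv_rank Hinv) (Hr i)).
Qed.

Lemma leader_decodes_new w : knows (K l) w -> w m.+1 != 0 -> decoded (K l) m.+1.
Proof.
move=> Hw Hwm; apply: (decoded_isolate (@support_window l) Hw Hwm) => k Hkm Hwk.
apply: leader_decoded; have /andP [-> Hk] := support_window Hw Hwk.
by rewrite -ltnS ltn_neqAle Hkm Hk.
Qed.

Lemma leader_not_knows w : w m.+1 != 0 -> ~ knows (K l) w.
Proof.
move=> Hwm /leader_decodes_new /(_ Hwm) Hm; apply: (@no_full_decoder l) => k /andP [Hk1].
by rewrite leq_eqVlt ltnS => /orP [/eqP ->|Hk] //; apply: leader_decoded; rewrite Hk1.
Qed.

Lemma leader_solved : solved (K l).
Proof.
move=> k Hk; have /andP [Hk1] := knowledge_heard (@support_window l) Hk.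
rewrite leq_eqVlt ltnS => /orP [/eqP Ek|Hkm]; last by apply: leader_decoded; rewrite Hk1.
by case: Hk => _ [w [Hw Hwk]]; rewrite Ek in Hwk *; exact: leader_decodes_new Hw Hwk.
Qed.

(* The relabelling rule puts the unsolved receiver, if any, at D. *)
Lemma n_solved : solved (K n).
Proof.
apply/solvedP => Hn; have [_ [_ [_ /(_ (inv_leader Hinv)) [_ HD]]]] := Hlab.
have Hd : unsolved_nonempty (K d).
  by apply: NNPP => Hd; apply/Hd/HD => E; apply/Hd/E.
exact: (inv_unsolved Hinv label_nd Hn Hd).
Qed.

Lemma S5_unique k1 k2 : S5 k1 -> S5 k2 -> k1 = k2.
Proof.
move=> [[H1 H2] H3] [[H4 H5] H6].
have Hdn : d != n by rewrite eq_sym label_nd.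
exact: (inv_outside Hinv Hdn (conj H1 (conj H2 H3)) (conj H4 (conj H5 H6))).
Qed.

Lemma U_window k : Defs.setU a m k -> (1 <= k <= m.+1)%N.
Proof. by rewrite /Defs.setU => -[/andP [-> /leqW ->]|[-> _]] //=; rewrite leqnn. Qed.

Lemma S5_window k : S5 k -> (1 <= k <= m.+1)%N.
Proof. by case=> [[/(knowledge_heard (@support_window d))]]. Qed.

Lemma decoded_window i k : decoded (K i) k -> (1 <= k <= m.+1)%N.
Proof. by move/decoded_heard/(knowledge_heard (@support_window i)). Qed.

Definition decodes_U i := forall k, Defs.setU a m k -> decoded (K i) k.

Lemma arrived_not_decodes_U i : (m.+1 <= a)%N -> ~ decodes_U i.
Proof.
move=> Ha HU; apply: (@no_full_decoder i) => k /andP [Hk1].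
rewrite leq_eqVlt ltnS => /orP [/eqP ->|Hkm]; apply: HU; [by right|by left; rewrite Hk1].
Qed.

Lemma pending_not_decodes_U i : ~ decoded_upto (K i) a -> ~ decodes_U i.
Proof.
move=> Hi HU; case: (leqP m.+1 a) => Ha; first exact: arrived_not_decodes_U Ha HU.
by apply: Hi => k /andP [Hk1 Hka]; apply: HU; left; rewrite Hk1 -ltnS (leq_trans _ Ha).
Qed.

Lemma n_decodes_U : ~ nonempty S4 -> ~ nonempty S5 -> ~ nonempty S6 -> decodes_U n.
Proof.
move=> N4 N5 N6 k Hk; apply: NNPP => Hn.
case: (classic (decoded (K d) k)) => Hd; first by apply: N4; exists k.
case: (classic (heard (K d) k)) => Hh; first by apply: N5; exists k.
by apply: N6; exists k; split=> // [[]].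
Qed.

(* When S2 is empty, the unsolved packets of D lie in S5. *)
Lemma d_solved : ~ nonempty S2 -> solved (K d).
Proof.
move=> N2; have Hout k : heard (K d) k -> ~ decoded (K d) k -> S5 k.
  move=> Hh Hd; split=> // Hn; apply: N2; by exists k.
case: (classic (nonempty S5)) => [[q Hq]|N5].
  apply: (solved_of_unsolved_le1 (q := q) (@support_window d)) => k Hh Hd.
  exact: S5_unique (Hout k Hh Hd) Hq.
by move=> k Hh; apply: NNPP => Hd; apply: N5; exists k; apply: Hout.
Qed.

Lemma d_decodes_U : ~ nonempty S2 -> ~ nonempty S3 -> ~ nonempty S6 -> decodes_U d.
Proof.
move=> N2 N3 N6 k Hk; apply: NNPP => Hd.
case: (classic (heard (K d) k)) => Hh; first exact/Hd/(d_solved N2).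
case: (classic (decoded (K n) k)) => Hn; first by apply: N3; exists k.
by apply: N6; exists k; split=> // [[]].
Qed.

Definition one_undecoded (L : seq vec) (v : vec) :=
  exists q, forall k, v k != 0 -> ~ decoded L k -> k = q.

Definition pending_for (v : vec) (k : nat) :=
  [/\ ~ decoded (K n) k, ~ decoded (K d) k & heard (K d) k \/ v k != 0].

(* What a transmission must satisfy for the invariant to survive any pattern of
   erasures: the window stays 1..m+1, N or D stays solved, and the pair (D, N)
   keeps at most one packet unsolved at D outside D_N. *)
Definition safe (v : vec) :=
  [/\ supported_in v m.+1,
      one_undecoded (K n) v \/ (solved (K d) /\ one_undecoded (K d) v)
    & one_undecoded (K d) v \/ (forall k1 k2, pending_for v k1 -> pending_for v k2 -> k1 = k2)].

Lemma one_undecoded_at L v q : (forall k, v k != 0 -> k = q \/ decoded L k) -> one_undecoded L v.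
Proof. by move=> Hv; exists q => k /Hv []. Qed.

Lemma pending_unique_at v p :
  (forall k, v k != 0 -> [\/ decoded (K n) k, decoded (K d) k | k = p]) ->
  S5 p \/ ~ nonempty S5 -> forall k1 k2, pending_for v k1 -> pending_for v k2 -> k1 = k2.
Proof.
move=> Hv H5; have Hp k : pending_for v k -> S5 k \/ k = p.
  by case=> Hn Hd [Hh|/Hv [//|//|->]]; [left|right].
case: H5 => [Hp5|N5] k1 k2 /Hp H1 /Hp H2.
  by apply: S5_unique; [case: H1 => [|->]|case: H2 => [|->]].
by case: H1 H2 => [H|->] [H'|->] //; case: N5; [exists k1|exists k1|exists k2].
Qed.

Lemma pending_unique_decoded v : (forall k, v k != 0 -> decoded (K n) k \/ decoded (K d) k) ->
  forall k1 k2, pending_for v k1 -> pending_for v k2 -> k1 = k2.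
Proof.
move=> Hv; case: (classic (nonempty S5)) => [[p Hp]|N5].
  by apply: (@pending_unique_at v p); [move=> k /Hv []; constructor|left].
by apply: (@pending_unique_at v 0); [move=> k /Hv []; constructor|right].
Qed.

Lemma safe_zero : safe vzero.
Proof. by split; [move=> k|left|left]; try exists 0%N => k; rewrite /vzero eqxx. Qed.

Lemma safe_unit p : (1 <= p <= m.+1)%N -> safe (unit_vec p).
Proof.
move=> Hp; have HU L : one_undecoded L (unit_vec p).
  by apply: (one_undecoded_at (q := p)) => k; rewrite unit_vec_neq0 => /eqP; left.
by split; [exact: supported_unit|left|left].
Qed.

Lemma safe_add_decoded q v : (1 <= q <= m.+1)%N -> decoded (K n) q -> decoded (K d) q ->
  safe v -> safe (vadd (unit_vec q) v).
Proof.
move=> Hq Hnq Hdq [Hsupp H2 H3].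
have Hsupp' k : vadd (unit_vec q) v k != 0 -> k = q \/ v k != 0.
  by case/vadd_neq0; [rewrite unit_vec_neq0 => /eqP|]; auto.
have HU L : decoded L q -> one_undecoded L v -> one_undecoded L (vadd (unit_vec q) v).
  move=> HLq [p Hp]; exists p => k /Hsupp' [->|Hk] //; exact: Hp.
split.
- by move=> k /Hsupp' [->|/Hsupp].
- by case: H2 => [/(HU _ Hnq)|[Hs /(HU _ Hdq)]]; [left|right].
- case: H3 => [/(HU _ Hdq)|Hpend]; [by left|right] => k1 k2 Hk1 Hk2.
  have Hv k : pending_for (vadd (unit_vec q) v) k -> pending_for v k.
    by case=> Hn Hd [Hh|/Hsupp' [Ek|Hk]]; split=> //; [left|rewrite Ek in Hn|right].
  exact: Hpend (Hv _ Hk1) (Hv _ Hk2).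
Qed.

Lemma S3_not_decoded k : S3 k -> ~ decoded (K d) k.
Proof. by case=> _ Hh /decoded_heard. Qed.

Lemma S6_not_decoded k : S6 k -> ~ decoded (K n) k /\ ~ decoded (K d) k.
Proof. by case=> _ H; split=> Hk; apply: H; [right|left; exact: decoded_heard]. Qed.

Inductive case1_shape (y : option vec) : Prop :=
| Case1Pair j k of decoded (K n) j & ~ decoded (K d) j & decoded (K d) k & ~ decoded (K n) k
    & y = Some (vadd (unit_vec j) (unit_vec k))
| Case1Both p of (1 <= p <= m.+1)%N & ~ decoded (K n) p & ~ decoded (K d) p
    & y = Some (unit_vec p)
| Case1OnlyD p of decoded (K n) p & decodes_U n & ~ decoded (K d) p & y = Some (unit_vec p)
| Case1OnlyN p of decoded (K d) p & decodes_U d & ~ decoded (K n) p & y = Some (unit_vec p)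
| Case1Nothing of decodes_U n & decodes_U d & y = None.

Lemma case1_single_shape y : ~ (nonempty S2 /\ nonempty S4) -> ~ (nonempty S3 /\ nonempty S4) ->
  (exists k, first_oldest [:: S5; S6; S2; S3; S4] k /\ y = Some (unit_vec k))
  \/ (all_empty [:: S5; S6; S2; S3; S4] /\ y = None) -> case1_shape y.
Proof.
move=> N24 N34 [[p [Hp ->]]|[[N5 [N6 [N2 [N3 [N4 _]]]]] ->]]; last first.
  by apply: Case1Nothing => //; [exact: n_decodes_U|exact: d_decodes_U].
case: Hp => [[_ [H5 _]]|[N5 [[_ [H6 _]]|[N6 Hp]]]].
- by case: H5 => [[Hh Hd] Hn]; apply: (Case1Both (p := p)) => //; apply: S5_window.
- have [Hn Hd] := S6_not_decoded H6.
  by apply: (Case1Both (p := p)) => //; case: H6 => /U_window.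
case: Hp => [[_ [H2 _]]|[N2 [[_ [H3 _]]|[N3 [[_ [[Hd Hn] _]]|[_ []]]]]]].
- have N4 : ~ nonempty S4 by move=> H4; apply: N24; split=> //; exists p.
  by case: H2 => [Hn [_ Hd]]; apply: (Case1OnlyD (p := p)) => //; apply: n_decodes_U.
- have N4 : ~ nonempty S4 by move=> H4; apply: N34; split=> //; exists p.
  case: (H3) => Hn _; apply: (Case1OnlyD (p := p)) => //; last exact: S3_not_decoded.
  exact: n_decodes_U.
- by apply: (Case1OnlyN (p := p)) => //; apply: d_decodes_U.
Qed.

Lemma case1P y : case1 K a m n d y -> case1_shape y.
Proof.
case=> [[_ [_ [j [k [[[Hn [_ Hd]] _] [[[Hk Hkn] _] ->]]]]]]|
        [[_ [_ [_ [j [k [[[Hn Hh] _] [[[Hk Hkn] _] ->]]]]]]]|[N24 [N34 H]]]].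
- exact: (Case1Pair (j := j) (k := k)).
- by apply: (Case1Pair (j := j) (k := k)) => //; exact: S3_not_decoded.
- exact: case1_single_shape.
Qed.

Lemma case1_innovative y i : i = n \/ i = d -> ~ decodes_U i -> case1_shape y ->
  exists v, y = Some v /\ ~ knows (K i) v.
Proof.
move=> Hi HU; case=> [j k Hjn Hjd Hkd Hkn ->|p Hp Hpn Hpd ->|p Hpn HUn Hpd ->|p Hpd HUd Hpn ->|
                      HUn HUd _].
- have Hjk : j != k by apply: contraPneq Hkn => <-.
  have Hk1 : (0 < k)%N by case/andP: (decoded_window Hkd).
  eexists; split=> //; case: Hi => ->.
    exact: (not_knows_solved n_solved (unit_plus_single_at_single (single_at_unit k) Hjk)).
  have Hj := unit_plus_single_at_unit (single_at_unit k) Hjk.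
  apply: (not_knows_isolated (@support_window d) Hj) => //.
  by move=> q Hqj /(unit_plus_single_supp (single_at_unit k)) [Eq|->] //; rewrite Eq eqxx in Hqj.
- by eexists; split=> //; case: Hi => ->; apply: not_knows_unit => //; case/andP: Hp.
- case: Hi => Ei; rewrite Ei in HU; first by [].
  by eexists; split=> //; rewrite Ei; apply: not_knows_unit Hpd; case/andP: (decoded_window Hpn).
- case: Hi => Ei; rewrite Ei in HU; last by [].
  by eexists; split=> //; rewrite Ei; apply: not_knows_unit Hpn; case/andP: (decoded_window Hpd).
- by case: Hi => Ei; rewrite Ei in HU.
Qed.

Lemma case1_safe y v : case1_shape y -> y = Some v -> safe v.
Proof.
case=> [j k Hjn Hjd Hkd Hkn ->|p Hp _ _ ->|p Hp _ _ ->|p Hp _ _ ->|_ _ ->] // [<-];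
  try by apply: safe_unit => //; exact: decoded_window Hp.
have Hsupp := @unit_plus_single_supp j k _ (single_at_unit k).
split.
- exact (unit_plus_single_supported (single_at_unit k) (decoded_window Hjn) (decoded_window Hkd)).
- by left; apply: (one_undecoded_at (q := k)) => q /Hsupp [->|->]; [right|left].
- by right; apply: pending_unique_decoded => q /Hsupp [->|->]; [left|right].
Qed.

Lemma case1_avoids y v k : case1_shape y -> y = Some v -> v k != 0 ->
  ~ decoded (K n) k \/ ~ decoded (K d) k.
Proof.
case=> [j k' Hjn Hjd Hkd Hkn ->|p _ Hpn _ ->|p _ _ Hpd ->|p _ _ Hpn ->|_ _ ->] // [<-].
- by case/(unit_plus_single_supp (single_at_unit k')) => ->; [right|left].
all: by rewrite unit_vec_neq0 => /eqP ->; auto.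
Qed.

Definition good_tx (x : option vec) :=
  (forall i, ~ decoded_upto (K i) a -> exists v, x = Some v /\ ~ knows (K i) v)
  /\ (forall v, x = Some v -> safe v).

Lemma good_tx_everyone v : ~ knows (K l) v -> ~ knows (K n) v -> ~ knows (K d) v -> safe v ->
  good_tx (Some v).
Proof.
move=> Hl Hn Hd Hv; split=> [i _|_ [<-] //].
by exists v; split=> //; case: (receiver_cases i) => ->.
Qed.

Lemma new_window : (1 <= m.+1 <= m.+1)%N.
Proof. by rewrite leqnn. Qed.

Lemma good_tx_case1 x : ~ (m.+1 <= a)%N -> case1 K a m n d x -> good_tx x.
Proof.
move=> Ha /case1P Hx; split=> [i Hi|v]; last exact: case1_safe Hx.
have Hnd : i = n \/ i = d.
  case: (receiver_cases i) => Ei; [exfalso|by left|by right].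
  apply: Hi => k /andP [Hk1 Hka]; rewrite Ei; apply leader_decoded.
  by rewrite Hk1 (leq_trans Hka) // leqNgt; apply/negP.
exact: case1_innovative Hnd (pending_not_decodes_U Hi) Hx.
Qed.

Lemma good_tx_case2 y : (m.+1 <= a)%N -> S1 m.+1 -> case1 K a m n d y ->
  good_tx (Some (match y with Some v => vadd new v | None => new end)).
Proof.
move=> Ha [Hnm Hdm] /case1P Hy.
have [v [Ey Hnv]] := case1_innovative (or_introl erefl) (arrived_not_decodes_U Ha) Hy.
rewrite Ey /new_pkt; apply: good_tx_everyone.
- apply: leader_not_knows; rewrite /vadd /unit_vec eqxx.
  have -> : v m.+1 = 0 by apply/eqP; apply: contraT => /(case1_avoids Hy Ey) [].
  by rewrite addr0 oner_neq0.
- by move/(knows_drop_decoded Hnm).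
- have [v' [Ey' Hdv]] := case1_innovative (or_intror erefl) (arrived_not_decodes_U Ha) Hy.
  by move: Ey'; rewrite Ey => -[->] /(knows_drop_decoded Hdm).
- exact: safe_add_decoded new_window Hnm Hdm (case1_safe Hy Ey).
Qed.

Lemma S456_window_undecoded p : first_oldest [:: S4; S5; S6] p ->
  (1 <= p <= m.+1)%N /\ ~ decoded (K n) p.
Proof.
case/first_oldest3P => [[/decoded_window Hp Hpn]|[_ H5]|[_ _ H6]] //.
- by split; [exact: S5_window|case: H5].
- by split; [case: H6 => /U_window|case: (S6_not_decoded H6)].
Qed.

(* Cases 3 and 4 share everything except the argument for receiver D. *)
Lemma new_plus_S456 w p : first_oldest [:: S4; S5; S6] p -> single_at w p ->
  decoded (K n) m.+1 ->
  [/\ ~ knows (K l) (vadd new w), ~ knows (K n) (vadd new w) & safe (vadd new w)].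
Proof.
move=> Hfo Hw Hnm; have [Hp Hpn] := S456_window_undecoded Hfo.
have Hmp : m.+1 != p by apply: contraPneq Hpn => <-.
have Hsupp := unit_plus_single_supp Hw.
split.
- exact: leader_not_knows (unit_plus_single_at_unit Hw Hmp).
- apply: (not_knows_solved n_solved (unit_plus_single_at_single Hw Hmp)) => //.
  by case/andP: Hp.
split.
- exact (unit_plus_single_supported Hw new_window Hp).
- by left; apply: (one_undecoded_at (q := p)) => k /Hsupp [->|->]; [right|left].
right; case/first_oldest3P: Hfo => [[Hpd _]|[_ H5]|[_ N5 _]].
- by apply: pending_unique_decoded => k /Hsupp [->|->]; [left|right].
- by apply: (pending_unique_at (p := p)); [move=> k /Hsupp [->|->]; constructor|left].
- by apply: (pending_unique_at (p := p)); [move=> k /Hsupp [->|->]; constructor|right].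
Qed.

Lemma coef_ok_neq0 p c : coef_ok K m n d p c -> c != 0.
Proof.
case=> H1 H2; case: (classic (S5 p)) => H5; last by rewrite (H1 H5) oner_neq0.
by case: (H2 H5) => [[->|->] _].
Qed.

Lemma good_tx_case3 x : (m.+1 <= a)%N -> S2 m.+1 ->
  (exists p c, first_oldest [:: S4; S5; S6] p /\ coef_ok K m n d p c /\
     x = Some (vadd new (vscale c (unit_vec p))))
  \/ (all_empty [:: S4; S5; S6] /\ x = Some new) -> good_tx x.
Proof.
move=> Ha [Hnm [_ Hdm]] [[p [c [Hfo [Hc ->]]]]|[[N4 [N5 [N6 _]]] _]]; last first.
  by case: (arrived_not_decodes_U Ha (n_decodes_U N4 N5 N6)).
have Hw := single_at_scale p (coef_ok_neq0 Hc).
have [Hl Hn Hsafe] := new_plus_S456 Hfo Hw Hnm; apply: good_tx_everyone => //.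
have [Hp Hpn] := S456_window_undecoded Hfo; have Hmp : m.+1 != p by apply: contraPneq Hpn => <-.
rewrite /new_pkt; case/first_oldest3P: Hfo => [[Hpd _]|[_ H5]|[_ _ H6]].
- apply: (not_knows_isolated (@support_window d) (unit_plus_single_at_unit Hw Hmp)) => //.
  by move=> k Hkm /(unit_plus_single_supp Hw) [Ek|->] //; rewrite Ek eqxx in Hkm.
- (* were both admissible coefficients known to D, D would know p_{m+1} *)
  case: Hc => _ /(_ H5) [_ Hc] Hk; apply: Hdm; split=> //.
  apply: (knows_of_two_coefs (p := p)); apply: NNPP => Hc'; apply: (Hc _ Hk);
    by [exists 1; split=> //; left|exists 2%:R; split=> //; right].
- apply: (not_knows_unheard (unit_plus_single_at_single Hw Hmp)); first by case/andP: Hp.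
  by case: H6 => _ Hh ?; apply: Hh; left.
Qed.

Lemma good_tx_case4 x : (m.+1 <= a)%N -> S3 m.+1 -> send_with m [:: S4; S5; S6] x ->
  good_tx x.
Proof.
move=> Ha [Hnm Hhm] [[p [Hfo ->]]|[[N4 [N5 [N6 _]]] _]]; last first.
  by case: (arrived_not_decodes_U Ha (n_decodes_U N4 N5 N6)).
have Hw := single_at_unit p.
have [Hl Hn Hsafe] := new_plus_S456 Hfo Hw Hnm; apply: good_tx_everyone => //.
have [_ Hpn] := S456_window_undecoded Hfo; have Hmp : m.+1 != p by apply: contraPneq Hpn => <-.
exact: not_knows_unheard (unit_plus_single_at_unit Hw Hmp) _ Hhm.
Qed.

Lemma good_tx_case5 x : (m.+1 <= a)%N -> S4 m.+1 -> send_with m [:: S2; S3; S6] x ->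
  good_tx x.
Proof.
move=> Ha [Hdm Hnm] [[p [Hfo ->]]|[[N2 [N3 [N6 _]]] _]]; last first.
  by case: (arrived_not_decodes_U Ha (d_decodes_U N2 N3 N6)).
have [Hp Hpd] : (1 <= p <= m.+1)%N /\ ~ decoded (K d) p.
  case/first_oldest3P: (Hfo) => [[/decoded_window Hp [_ Hpd]]|[_ H3]|[_ _ H6]] //.
  - by case: (H3) => /decoded_window Hp _; split=> //; exact: S3_not_decoded.
  - by split; [case: H6 => /U_window|case: (S6_not_decoded H6)].
have Hmp : m.+1 != p by apply: contraPneq Hpd => <-.
have Hw := single_at_unit p; have Hsupp := unit_plus_single_supp Hw.
rewrite /new_pkt; apply: good_tx_everyone.
- exact: leader_not_knows (unit_plus_single_at_unit Hw Hmp).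
- exact: not_knows_solved n_solved (unit_plus_single_at_unit Hw Hmp) _ Hnm.
- apply: (not_knows_isolated (@support_window d) (unit_plus_single_at_single Hw Hmp)) => //.
  by move=> k Hkp /Hsupp [->|Ek] //; rewrite Ek eqxx in Hkp.
have HUd : one_undecoded (K d) (vadd (unit_vec m.+1) (unit_vec p)).
  by apply: (one_undecoded_at (q := p)) => k /Hsupp [->|->]; [right|left].
split; [exact (unit_plus_single_supported Hw new_window Hp)| |by left].
case/first_oldest3P: Hfo => [[Hpn _]|[_ [Hpn _]]|[N2 _ _]];
  last by right; split; [exact: d_solved|].
all: by left; apply: (one_undecoded_at (q := m.+1)) => k /Hsupp [->|->]; [left|right].
Qed.

Lemma good_tx_case6 : (m.+1 <= a)%N -> ~ S1 m.+1 -> ~ S2 m.+1 -> ~ S3 m.+1 -> ~ S4 m.+1 ->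
  good_tx (Some new).
Proof.
move=> Ha N1 N2 N3 N4; have Hdm : ~ decoded (K d) m.+1.
  move=> Hdm; apply: N4; split=> // Hnm; by apply: N1.
have Hnm : ~ decoded (K n) m.+1.
  move=> Hnm; case: (classic (heard (K d) m.+1)) => Hh; [exact: N2|exact: N3].
rewrite /new_pkt; apply: good_tx_everyone; last exact: safe_unit new_window.
- by apply: leader_not_knows; rewrite unit_vec_neq0.
- exact: not_knows_unit.
- exact: not_knows_unit.
Qed.

Lemma good_tx_rule x : tx_rule K a m n d x -> good_tx x.
Proof.
case=> [[Ha Hx]|[[Ha [H1 [y [Hy ->]]]]|[[Ha [H2 Hx]]|[[Ha [H3 Hx]]|[[Ha [H4 Hx]]|
        [Ha [N1 [N2 [N3 [N4 ->]]]]]]]]]].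
- exact: good_tx_case1.
- exact: good_tx_case2.
- exact: good_tx_case3.
- exact: good_tx_case4.
- exact: good_tx_case5.
- exact: good_tx_case6.
Qed.

Section Receipt.

Variables (v : vec) (K' : 'I_3 -> seq vec) (m' : nat).
Hypotheses (Hsafe : safe v) (HK' : forall i, K' i = K i \/ K' i = rcons (K i) v)
  (HM' : max_rank K' m').

Lemma support_window_after i : knowledge_in (K' i) m.+1.
Proof.
case: Hsafe => Hv _ _; case: (HK' i) => ->; first exact (@support_window i).
exact (knowledge_rcons (@support_window i) Hv).
Qed.

Lemma decoded_after i k : decoded (K i) k -> decoded (K' i) k.
Proof. by case: (HK' i) => -> //; exact: decoded_rcons. Qed.

Lemma unsolved_after i k : heard (K' i) k -> ~ decoded (K' i) k ->
  ~ decoded (K i) k /\ (heard (K i) k \/ v k != 0).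
Proof.
move=> Hh Hd; split; first by move/decoded_after; apply: Hd.
by case: (HK' i) Hh => ->; [left|apply: heard_rconsP].
Qed.

(* A packet first heard of through [v] is decoded at once, being the only undecoded one in [v]. *)
Lemma unsolved_after_one i k : one_undecoded (K i) v -> heard (K' i) k -> ~ decoded (K' i) k ->
  heard (K i) k /\ ~ decoded (K i) k.
Proof.
move=> [q Hq] Hh Hd; have [Hdk [Hhk|Hvk]] := unsolved_after Hh Hd; first by [].
case: (HK' i) Hh Hd => -> Hh Hd; first by [].
exfalso; have Ek := Hq k Hvk Hdk; subst k; case: Hsafe => Hv _ _; apply: Hd.
apply: (decoded_isolate (knowledge_rcons (@support_window i) Hv) (knows_rcons_last _ _) Hvk).
move=> k Hkq Hvk'; apply: decoded_rcons; apply: NNPP => Hk.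
by move/eqP: Hkq; apply; exact: Hq.
Qed.

Lemma solved_after i : solved (K i) -> one_undecoded (K i) v -> solved (K' i).
Proof.
move=> Hs HU k Hh; apply: NNPP => Hd; have [Hhk Hdk] := unsolved_after_one HU Hh Hd.
exact/Hdk/Hs.
Qed.

Lemma leader_solved_after : solved (K' l).
Proof.
apply: solved_after leader_solved _; case: Hsafe => Hv _ _.
apply: (one_undecoded_at (q := m.+1)) => k /Hv /andP [Hk1].
by rewrite leq_eqVlt ltnS => /orP [/eqP ->|Hkm]; [left|right; apply leader_decoded; rewrite Hk1].
Qed.

Lemma n_or_d_solved_after : solved (K' n) \/ solved (K' d).
Proof.
case: Hsafe => _ [HU|[Hs HU]] _; [left; exact: solved_after n_solved HU|right].
exact: solved_after Hs HU.
Qed.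

Lemma rank_after_ge : (m <= m')%N.
Proof.
have [r [Hr ->]] := HM'; apply: leq_trans (leq_bigmax l).
apply: (rank_ge_decoded (Hr l)) => k Hk; apply: decoded_after; exact: leader_decoded.
Qed.

Lemma leader_after : exists i, decoded_upto (K' i) m'.
Proof.
case: (leqP m' m) => Hm.
  by exists l => k /andP [Hk1 Hk]; apply/decoded_after/leader_decoded; rewrite Hk1 (leq_trans Hk).
have [r [Hr Er]] := HM'.
have [i0 Hi0] := eq_bigmax r (ltac:(by rewrite card_ord) : (0 < #|'I_3|)%N).
have [[B [HBr [HB HBK]]] _] := Hr i0.
have HBsupp j : (j < size B)%N -> supported_in (nth vzero B j) m.+1.
  by move=> Hj; apply: support_window_after; exact: HBK.
have Hsz : size B = m.+1.
  by apply/eqP; rewrite eqn_leq lin_indep_size // HBr -Hi0 -Er.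
have Em : m' = m.+1 by rewrite Er Hi0 -HBr Hsz.
exists i0 => k Hk; split; first by case/andP: Hk.
by apply: (lin_indep_span HBsupp HB Hsz HBK); rewrite -Em.
Qed.

Lemma unsolved_after_unique : exists u, forall i, unsolved_nonempty (K' i) -> i = u.
Proof.
have Hl := leader_solved_after.
case: n_or_d_solved_after => Hs; [exists d|exists n] => i Hi;
  case: (receiver_cases i) => Ei //; exfalso; move: Hi; rewrite Ei; apply/solvedP => //.
Qed.

Lemma outside_leader_after i k : unsolved_outside (K' i) (K' l) k -> k = m.+1.
Proof.
move=> [Hh [_ Hd]]; have /andP [Hk1] := knowledge_heard (@support_window_after i) Hh.
rewrite leq_eqVlt ltnS => /orP [/eqP //|Hkm]; exfalso.
by apply/Hd/decoded_after; apply leader_decoded; rewrite Hk1.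
Qed.

Lemma outside_nd_after : exists q, forall k, unsolved_outside (K' n) (K' d) k -> k = q.
Proof.
case: Hsafe => _ [HUn|[_ [q Hq]]] _.
  by exists 0 => k [Hh [Hd _]]; exfalso; exact/Hd/(solved_after n_solved HUn).
exists q => k [Hh [Hd Hdd]]; have [Hnk [Hhk|Hvk]] := unsolved_after Hh Hd.
  by exfalso; exact/Hnk/n_solved.
by apply: Hq Hvk _ => /decoded_after.
Qed.

Lemma outside_dn_after k1 k2 : unsolved_outside (K' d) (K' n) k1 ->
  unsolved_outside (K' d) (K' n) k2 -> k1 = k2.
Proof.
case: Hsafe => _ _ [HUd|Hpend].
  have H5 k : unsolved_outside (K' d) (K' n) k -> S5 k.
    move=> [Hh [Hd Hn]]; have [Hhk Hdk] := unsolved_after_one HUd Hh Hd.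
    by split=> // /decoded_after.
  by move=> /H5 H1 /H5 H2; exact: S5_unique.
have Hp k : unsolved_outside (K' d) (K' n) k -> pending_for v k.
  by move=> [Hh [Hd Hn]]; have [Hdk Hk] := unsolved_after Hh Hd; split=> // /decoded_after.
by move=> /Hp H1 /Hp H2; exact: Hpend.
Qed.

Lemma outside_after i j : i != j -> forall k1 k2,
  unsolved_outside (K' i) (K' j) k1 -> unsolved_outside (K' i) (K' j) k2 -> k1 = k2.
Proof.
move=> Hij k1 k2 H1 H2; case: (receiver_cases i) => Ei; subst i.
  by case: H1 => Hh [Hd _]; exfalso; exact/Hd/leader_solved_after.
case: (receiver_cases j) Hij => Ej; subst j => Hij.
- by rewrite (outside_leader_after H1) (outside_leader_after H2).
- by rewrite eqxx in Hij.
- by have [q Hq] := outside_nd_after; rewrite (Hq _ H1) (Hq _ H2).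
case: (receiver_cases j) Hij => Ej; subst j => Hij.
- by rewrite (outside_leader_after H1) (outside_leader_after H2).
- exact: outside_dn_after H1 H2.
- by rewrite eqxx in Hij.
Qed.

Lemma slot_invariant_after : slot_invariant K' m'.
Proof.
split=> //; last exact: outside_after.
- by move=> i; apply: knowledge_in_widen (@support_window_after i); rewrite ltnS rank_after_ge.
- exact: leader_after.
- move=> i j Hij Hi Hj; have [u Hu] := unsolved_after_unique.
  by move: Hij; rewrite (Hu _ Hi) (Hu _ Hj) eqxx.
Qed.

End Receipt.

End Slot.

Lemma heard_nil k : ~ heard [::] k.
Proof. by move=> [_ [w [Hw]]]; rewrite (knows_nil k Hw) eqxx. Qed.

Lemma slot_invariant_init (K : 'I_3 -> seq vec) : (forall i, K i = [::]) ->
  slot_invariant K 0 /\ valid_labels K 0 r1 r2 r3.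
Proof.
move=> HK; have Hun i : ~ unsolved_nonempty (K i) by rewrite HK => -[k [/heard_nil]].
split; last first.
  do 3 split=> //; move=> _; split; first by split=> // k /andP [/leq_trans H /H].
  by move=> Hiff; exfalso; apply: Hiff; split=> /Hun.
split.
- by move=> i; rewrite HK; exact: knowledge_nil.
- by exists r1 => k /andP [/leq_trans H /H].
- exists (fun _ => 0%N); split; first by move=> i; rewrite HK; exact: is_rank_nil.
  by apply/esym/eqP; rewrite -leqn0; apply/bigmax_leqP.
- by move=> i j _ /Hun.
- by move=> i j _ k1 k2 []; rewrite HK => /heard_nil.
Qed.

Lemma slot_invariant_run arr rcv K m lL lN lD tx :
  valid_run arr rcv K m lL lN lD tx ->
  forall t, slot_invariant (K t) (m t) /\ valid_labels (K t) (m t) (lL t) (lN t) (lD t).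
Proof.
move=> [_ [H0 [Hm0 [Hl0 [Hn0 [Hd0 [Htx [Hup [Hmr Hlab]]]]]]]]].
elim=> [|t [HI HL]]; first by rewrite Hm0 Hl0 Hn0 Hd0; exact: slot_invariant_init.
split=> //; have [_ Hsafe] := good_tx_rule HI HL (Htx t).
case E: (tx t) => [v|].
  apply: (slot_invariant_after HI HL (Hsafe v E) _ (Hmr t)) => i.
  by rewrite Hup E; case: (rcv t i); [right|left].
by apply: (slot_invariant_after HI HL (safe_zero _ _ _ _) _ (Hmr t)) => i; rewrite Hup E; left.
Qed.

Theorem theorem13 (arr : nat -> nat) (rcv : nat -> 'I_3 -> bool)
    (K : nat -> 'I_3 -> seq vec) (m : nat -> nat) (lL lN lD : nat -> 'I_3)
    (tx : nat -> option vec) :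
  valid_run arr rcv K m lL lN lD tx ->
  forall (t : nat) (i : 'I_3),
    ~ decoded_upto (K t i) (arr t) ->
    exists v, tx t = Some v /\ ~ knows (K t i) v.
Proof.
move=> Hrun t i Hi; have [HI HL] := slot_invariant_run Hrun t.
have [_ [_ [_ [_ [_ [_ [Htx _]]]]]]] := Hrun.
by have [Hgood _] := good_tx_rule HI HL (Htx t); exact: Hgood.
Qed.
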